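(* Consider the $k$-prize collecting traveling salesman problem ($k$-PCTSP) on instances $(G,r,k,c,\pi)$ whose edge cost $c$ satisfies the triangle inequality. The algorithm $\mathcal{B}$ described below is a $4$-approximation algorithm for this problem: it returns a tour $T_{\mathrm{OUT}}$ containing $r$ and visiting at least $k$ vertices whose cost $\sum_{e\in E[T_{\mathrm{OUT}}]}c(e)+\sum_{v\notin V[T_{\mathrm{OUT}}]}\pi(v)$ is at most $4\,\mathrm{OPT}$, where $\mathrm{OPT}$ is the optimal value of the $k$-PCTSP instance.
   Context: A tour of a graph $G$ is a cyclic sequence of vertices $T=(u_1,\dots,u_m,u_1)$, with $E[T]=\{\{u_i,u_{i+1}\}: 1\le i\le m-1\}\cup\{\{u_m,u_1\}\}$ and $V[T]=\{u_1,\dots,u_m\}$. An instance of $k$-PCTSP consists of a complete graph $G=(V,E)$, a root $r\in V$, an integer $k>0$, a nonnegative edge cost $c:E\to\mathbb{R}_+$ and a nonnegative penalty $\pi:V\to\mathbb{R}_+$; a feasible solution is a tour $T$ with $r\in V[T]$ and $|V[T]|\ge k$, of cost $\sum_{e\in E[T]}c(e)+\sum_{v\in V\setminus V[T]}\pi(v)$, and $\mathrm{OPT}$ is the minimum cost. The rooted $k$-TSP instance $(G,r,k,c)$ asks for a tour containing $r$ with at least $k$ vertices minimizing $\sum_{e\in E[T]}c(e)$; the penalty TSP (PTSP) instance $(G,r,c,\pi)$ asks for a tour containing $r$ minimizing $\sum_{e\in E[T]}c(e)+\sum_{v\notin V[T]}\pi(v)$. Garg's algorithm is a 2-approximation algorithm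 for rooted $k$-TSP under the triangle inequality, and the Goemans–Williamson (GW) algorithm is a 2-approximation algorithm for PTSP under the triangle inequality. Algorithm $\mathcal{B}$: Step 1: apply Garg's algorithm to $(G,r,k,c)$, obtaining a tour $T_{\mathrm{Garg}}$. Step 2: apply the GW algorithm to $(G,r,c,\pi)$, obtaining a tour $T_{\mathrm{GW}}$. Step 3: merge $T_{\mathrm{Garg}}$ and $T_{\mathrm{GW}}$ (both pass through $r$) into a single closed walk and return the tour $T_{\mathrm{OUT}}$ obtained from it by shortcutting repeated vertices. *)

From HB Require Import structures.
From mathcomp Require Import all_boot all_order all_algebra.
Set Implicit Arguments. Unset Strict Implicit. Unset Printing Implicit Defensive.
Import Order.TTheory GRing.Theory Num.Theory.
Local Open Scope ring_scope.

(* A tour T = (u_1,...,u_m,u_1) is represented by the sequence [:: u_1; ...; u_m]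
   (cyclic).  V[T] is the set of items of T. *)

Section Tours.
Variables (R : realFieldType) (V : finType).

(* edge cost of the tour: sum of c over the cyclic consecutive pairs
   (u_1,u_2), ..., (u_{m-1},u_m), (u_m,u_1) *)
Definition tour_edge_cost (c : V -> V -> R) (T : seq V) : R :=
  match T with
  | [::] => 0
  | x :: s => \sum_(p <- zip (x :: s) (rcons s x)) c p.1 p.2
  end.

Definition tour_penalty (pi : V -> R) (T : seq V) : R :=
  \sum_(v | v \notin T) pi v.

Definition nverts (T : seq V) : nat := #|[pred v | v \in T]|.

Definition kpctsp_feasible (r : V) (k : nat) (T : seq V) : Prop :=
  r \in T /\ (k <= nverts T)%N.
Definition kpctsp_cost (c : V -> V -> R) (pi : V -> R) (T : seq V) : R :=
  tour_edge_cost c T + tour_penalty pi T.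

Definition ktsp_feasible (r : V) (k : nat) (T : seq V) : Prop :=
  r \in T /\ (k <= nverts T)%N.
Definition ktsp_cost (c : V -> V -> R) (T : seq V) : R := tour_edge_cost c T.

Definition ptsp_feasible (r : V) (T : seq V) : Prop := r \in T.
Definition ptsp_cost (c : V -> V -> R) (pi : V -> R) (T : seq V) : R :=
  tour_edge_cost c T + tour_penalty pi T.

(* Step 3: both tours pass through r; rotate each to start at r and
   concatenate: the closed walk r ~T1~> r ~T2~> r. *)
Definition merge_at (r : V) (T1 T2 : seq V) : seq V :=
  rot (index r T1) T1 ++ rot (index r T2) T2.

(* T is obtained from the closed walk W by shortcutting repeated vertices:
   it keeps exactly one occurrence of each vertex of W, in walk order. *)
Definition is_shortcut (T W : seq V) : Prop :=
  [/\ subseq T W, uniq T & {subset W <= T}].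

End Tours.

From HB Require Import structures.
From mathcomp Require Import all_boot all_order all_algebra.
From mathcomp Require Import lra.
Import Order.TTheory GRing.Theory Num.Theory.
Set Implicit Arguments. Unset Strict Implicit. Unset Printing Implicit Defensive.
Local Open Scope ring_scope.

(* Rotating the two tours to start at r and concatenating them gives a closed
   walk whose cost is c(T_Garg) + c(T_GW); shortcutting it cannot increase the
   cost (triangle inequality) and it visits every vertex of both tours.  Hence
   T_OUT has at least k vertices, edge cost at most 2 OPT_kTSP + 2 OPT_PTSP and
   penalty at most that of T_GW.  Every k-PCTSP tour is feasible for both
   relaxations, and each relaxation's optimum is at most OPT, so the total is at
   most 4 OPT. *)

Section PathCost.
Variables (R : realFieldType) (V : finType) (c : V -> V -> R).

Fixpoint path_cost (x : V) (s : seq V) : R :=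
  if s is y :: s' then c x y + path_cost y s' else 0.

Lemma path_cost_cat x s t :
  path_cost x (s ++ t) = path_cost x s + path_cost (last x s) t.
Proof. by elim: s x => [|y s IHs] x /=; rewrite ?add0r // IHs addrA. Qed.

Lemma path_cost_rcons x s y :
  path_cost x (rcons s y) = path_cost x s + c (last x s) y.
Proof. by rewrite -cats1 path_cost_cat /= addr0. Qed.

Lemma tour_edge_cost_cons x s :
  tour_edge_cost c (x :: s) = path_cost x (rcons s x).
Proof.
rewrite /=; move: {2 4}x => y.
by elim: s x => [|z s IHs] x /=; rewrite big_cons ?big_nil // IHs.
Qed.

Lemma tour_edge_cost_catC s t :
  tour_edge_cost c (s ++ t) = tour_edge_cost c (t ++ s).
Proof.
case: s => [|x s]; first by rewrite cats0.
case: t => [|y t]; first by rewrite cats0.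
rewrite !cat_cons !tour_edge_cost_cons !rcons_cat !path_cost_cat /=.
rewrite !path_cost_rcons; lra.
Qed.

Lemma tour_edge_cost_rot n s : tour_edge_cost c (rot n s) = tour_edge_cost c s.
Proof. by rewrite /rot tour_edge_cost_catC cat_take_drop. Qed.

Lemma tour_edge_cost_cat_cons x s t :
  tour_edge_cost c ((x :: s) ++ x :: t) =
  tour_edge_cost c (x :: s) + tour_edge_cost c (x :: t).
Proof.
rewrite cat_cons !tour_edge_cost_cons rcons_cat path_cost_cat /=.
rewrite !path_cost_rcons; lra.
Qed.

Hypothesis c_ge0 : forall u v, 0 <= c u v.
Hypothesis c_tri : forall u v w, c u w <= c u v + c v w.

Lemma path_cost_ge0 x s : 0 <= path_cost x s.
Proof. by elim: s x => [|y s IHs] x //=; rewrite addr_ge0. Qed.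

Lemma path_cost_shortcut x y z s :
  path_cost x (rcons s y) <= path_cost x (rcons (z :: s) y).
Proof.
case: s => [|u s] /=; first by rewrite !addr0.
by rewrite addrA lerD2r.
Qed.

Lemma path_cost_subseq x y s t :
  subseq s t -> path_cost x (rcons s y) <= path_cost x (rcons t y).
Proof.
elim: t s x => [|z t IHt] s x; first by rewrite subseq0 => /eqP ->.
have drop_z s' :
    subseq s' t -> path_cost x (rcons s' y) <= path_cost x (rcons (z :: t) y).
  by move=> /(IHt _ x) /le_trans; apply; apply: path_cost_shortcut.
case: s => [_|a s]; first by apply: drop_z; rewrite sub0seq.
by rewrite /=; case: eqP => [-> /IHt|_ /drop_z //]; rewrite lerD2l.
Qed.

Lemma subseq_cons_split (a : V) s w :
  subseq (a :: s) w -> exists w1 w2, w = w1 ++ a :: w2 /\ subseq s w2.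
Proof.
elim: w => [//|b w IHw] /=.
case: eqP => [<- sub_s|_ /IHw [w1 [w2 [-> sub_s]]]]; first by exists [::], w.
by exists (b :: w1), w2.
Qed.

Lemma tour_edge_cost_subseq s w :
  subseq s w -> tour_edge_cost c s <= tour_edge_cost c w.
Proof.
case: s => [|a s] sub_sw.
  by case: w {sub_sw} => [|b w] //; rewrite tour_edge_cost_cons path_cost_ge0.
have [w1 [w2 [-> sub_s]]] := subseq_cons_split sub_sw.
rewrite tour_edge_cost_catC !tour_edge_cost_cons.
by apply: path_cost_subseq; apply: subseq_trans sub_s (prefix_subseq _ _).
Qed.

End PathCost.

Section Tours.
Variables (R : realFieldType) (V : finType).

Lemma rot_index_cons (r : V) T :
  r \in T -> exists s, rot (index r T) T = r :: s.
Proof.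
move=> rT; rewrite /rot (drop_nth r) ?index_mem // nth_index //.
by eexists.
Qed.

Lemma mem_merge_at (r x : V) T1 T2 :
  (x \in merge_at r T1 T2) = (x \in T1) || (x \in T2).
Proof. by rewrite mem_cat !mem_rot. Qed.

Lemma tour_edge_cost_merge_at (c : V -> V -> R) (r : V) T1 T2 :
  r \in T1 -> r \in T2 ->
  tour_edge_cost c (merge_at r T1 T2) =
  tour_edge_cost c T1 + tour_edge_cost c T2.
Proof.
move=> /rot_index_cons [s1 rot1] /rot_index_cons [s2 rot2].
rewrite /merge_at rot1 rot2 tour_edge_cost_cat_cons -rot1 -rot2.
by rewrite !tour_edge_cost_rot.
Qed.

Lemma nverts_subset (T T' : seq V) :
  {subset T <= T'} -> (nverts T <= nverts T')%N.
Proof. by move=> sub_TT'; apply/subset_leq_card/subsetP => x; apply: sub_TT'. Qed.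

Variable pi : V -> R.
Hypothesis pi_ge0 : forall v, 0 <= pi v.

Lemma tour_penalty_ge0 T : 0 <= tour_penalty pi T.
Proof. exact: sumr_ge0. Qed.

Lemma tour_penalty_subset (T T' : seq V) :
  {subset T <= T'} -> tour_penalty pi T' <= tour_penalty pi T.
Proof.
move=> sub_TT'; rewrite /tour_penalty !(big_mkcond (fun v => v \notin _)).
apply: ler_sum => v _; case: (boolP (v \in T)) => [/sub_TT' -> //|_] /=.
by case: (v \notin T').
Qed.

End Tours.

Theorem theorem3 (R : realFieldType) (V : finType) (r : V) (k : nat)
    (c : V -> V -> R) (pi : V -> R)
    (c_sym : forall u v, c u v = c v u)
    (c_ge0 : forall u v, 0 <= c u v)
    (c_refl : forall v, c v v = 0)
    (c_tri : forall u v w, c u w <= c u v + c v w)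
    (pi_ge0 : forall v, 0 <= pi v)
    (TGarg TGW TOUT : seq V)
    (* Step 1: output of Garg's 2-approximation for rooted k-TSP *)
    (HGarg_feas : ktsp_feasible r k TGarg)
    (HGarg_apx : forall T, ktsp_feasible r k T ->
                   ktsp_cost c TGarg <= 2 * ktsp_cost c T)
    (* Step 2: output of the GW 2-approximation for PTSP *)
    (HGW_feas : ptsp_feasible r TGW)
    (HGW_apx : forall T, ptsp_feasible r T ->
                 ptsp_cost c pi TGW <= 2 * ptsp_cost c pi T)
    (* Step 3: merge and shortcut *)
    (HOUT : is_shortcut TOUT (merge_at r TGarg TGW)) :
  kpctsp_feasible r k TOUT /\
  (forall T, kpctsp_feasible r k T ->
     kpctsp_cost c pi TOUT <= 4 * kpctsp_cost c pi T).
Proof.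
case: HOUT => shortcut_walk _ covers_walk; case: (HGarg_feas) => rGarg kGarg.
have subGarg : {subset TGarg <= TOUT}.
  by move=> x xT; apply: covers_walk; rewrite mem_merge_at xT.
have subGW : {subset TGW <= TOUT}.
  by move=> x xT; apply: covers_walk; rewrite mem_merge_at xT orbT.
split.
  by split; [exact: subGarg | exact: leq_trans kGarg (nverts_subset subGarg)].
move=> T feasT.
have edges_OUT : tour_edge_cost c TOUT <=
                 tour_edge_cost c TGarg + tour_edge_cost c TGW.
  rewrite -(tour_edge_cost_merge_at c rGarg HGW_feas).
  exact: tour_edge_cost_subseq shortcut_walk.
have penalty_OUT := tour_penalty_subset pi_ge0 subGW.
have := HGarg_apx T feasT; have := HGW_apx T (proj1 feasT).
have := tour_penalty_ge0 pi_ge0 T.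
move: edges_OUT penalty_OUT; rewrite /kpctsp_cost /ktsp_cost /ptsp_cost; lra.
Qed.
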